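(* Let $$\Pi_0(\phi)=2\sum_{n=1}^{\infty}\frac{(-1)^{n-1}}{n^3\binom{2n}{n}}\,\phi^{n-1}=1-\frac{\phi}{24}+\frac{\phi^2}{270}+\cdots,$$ a power series converging on the disc $|\phi|<4$. Then $\Pi_0$ satisfies the ordinary differential equation $$\Big((4+\phi)\vartheta^4+(10+4\phi)\vartheta^3+(8+6\phi)\vartheta^2+(2+4\phi)\vartheta+\phi\Big)\Pi_0(\phi)=0,$$ where $\vartheta=\phi\,\frac{d}{d\phi}$.
   Context: $\binom{2n}{n}$ denotes the central binomial coefficient. The operator $\vartheta=\phi\frac{d}{d\phi}$ is the Euler derivative, and $\vartheta^k$ denotes its $k$-fold iterate. *)

From Stdlib Require Import Reals ClassicalEpsilon.
From Coquelicot Require Import Coquelicot.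
Open Scope C_scope.

Definition central_binom (n : nat) : R := Binomial.C (2 * n) n.

(* coefficient of phi^m in Pi_0 (i.e. n = m+1 in the paper's sum):
   2 (-1)^(n-1) / (n^3 binom(2n,n)) *)
Definition Pi0_coef (m : nat) : C :=
  RtoC (2 * (-1) ^ m / ((INR (S m)) ^ 3 * central_binom (S m)))%R.

(* the sum of the power series (chosen classically; meaningful where it converges) *)
Definition Pi0 (phi : C) : C :=
  epsilon (inhabits (RtoC 0)) (fun l => is_series (fun m => Pi0_coef m * phi ^ m) l).

(* complex derivative of f at z (chosen classically; meaningful where f is differentiable) *)
Definition CDerive (f : C -> C) (z : C) : C :=
  epsilon (inhabits (RtoC 0)) (fun l => is_derive f z l).

Definition theta (f : C -> C) : C -> C := fun phi => phi * CDerive f phi.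
Fixpoint theta_n (k : nat) (f : C -> C) : C -> C :=
  match k with O => f | S k => theta (theta_n k f) end.

(* The coefficients a_m = 2 (-1)^m / ((m+1)^3 binom(2m+2, m+1)) of Pi_0 satisfy
     2 (m+1) (m+2)^2 (2m+3) a_(m+1) + (m+1)^4 a_m = 0,
   so |a_(m+1)| <= |a_m| / 4 and the series converges absolutely on |phi| < 4.  There it can
   be differentiated termwise, so theta acts on coefficients as multiplication by m.  The
   operator is P(theta) + phi Q(theta) with P(x) = 4x^4 + 10x^3 + 8x^2 + 2x = 2x(x+1)^2(2x+1)
   and Q(x) = (x+1)^4; as P(0) = 0, the coefficient of phi^(m+1) in its image is
   P(m+1) a_(m+1) + Q(m) a_m, which is the recurrence above. *)

From Stdlib Require Import Reals Lra Lia ClassicalEpsilon.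
From Coquelicot Require Import Coquelicot.
Open Scope R_scope.

Definition abs_conv_in (rho : R) (c : nat -> C) : Prop :=
  forall r, 0 < r < rho -> ex_series (fun m => Cmod (c m) * r ^ m).

Definition PSeriesC (c : nat -> C) (z : C) : C :=
  epsilon (inhabits (RtoC 0)) (fun l => is_series (fun m => c m * z ^ m)%C l).

Definition PSC_derive (c : nat -> C) (m : nat) : C := (INR (S m) * c (S m))%C.

Definition theta_coef (c : nat -> C) (m : nat) : C := (INR m * c m)%C.

Lemma is_series_C_unique (a : nat -> C) (l1 l2 : C) :
  is_series a l1 -> is_series a l2 -> l1 = l2.
Proof. exact (filterlim_locally_unique _ l1 l2). Qed.

Lemma is_series_C_scal (x : C) (a : nat -> C) (l : C) :
  is_series a l -> is_series (fun m => x * a m)%C (x * l)%C.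
Proof. exact (is_series_scal (K := C_AbsRing) (V := C_NormedModule) x a l). Qed.

Lemma is_series_C_plus (a b : nat -> C) (la lb : C) :
  is_series a la -> is_series b lb -> is_series (fun m => a m + b m)%C (la + lb)%C.
Proof. exact (is_series_plus (K := C_AbsRing) (V := C_NormedModule) a b la lb). Qed.

Lemma is_series_C_minus (a b : nat -> C) (la lb : C) :
  is_series a la -> is_series b lb -> is_series (fun m => a m - b m)%C (la - lb)%C.
Proof. exact (is_series_minus (K := C_AbsRing) (V := C_NormedModule) a b la lb). Qed.

Lemma is_series_C_ext (a b : nat -> C) (l : C) :
  (forall m, a m = b m) -> is_series a l -> is_series b l.
Proof. exact (is_series_ext a b l). Qed.

Lemma Cmod_is_series_le (a : nat -> C) (b : nat -> R) (la : C) (lb : R) :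
  is_series a la -> is_series b lb -> (forall n, Cmod (a n) <= b n) -> Cmod la <= lb.
Proof.
  intros Ha Hb Hab.
  assert (Hlim : filterlim (fun n => norm (sum_n a n)) eventually (locally (norm la))).
  { eapply filterlim_comp; [exact Ha | apply filterlim_norm]. }
  assert (Hle : eventually (fun n => norm (sum_n a n) <= sum_n b n)).
  { exists 0%nat. intros n _.
    eapply Rle_trans; [apply (norm_sum_n_m (K := C_AbsRing) (V := C_NormedModule))|].
    apply sum_n_m_le. exact Hab. }
  exact (filterlim_le (F := eventually) _ _ (norm la) lb Hle Hlim Hb).
Qed.

Lemma PSeriesC_correct (c : nat -> C) (z : C) :
  ex_series (fun m => c m * z ^ m)%C -> is_series (fun m => c m * z ^ m)%C (PSeriesC c z).
Proof. exact (epsilon_spec _ (fun l => is_series (fun m => c m * z ^ m)%C l)). Qed.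

Lemma abs_conv_in_ex_series (rho : R) (c : nat -> C) (z : C) :
  abs_conv_in rho c -> Cmod z < rho -> ex_series (fun m => c m * z ^ m)%C.
Proof.
  intros Hc Hz. pose proof (Cmod_ge_0 z) as Hz0.
  apply (ex_series_le (K := C_AbsRing) (V := C_CompleteNormedModule) _
           (fun m => Cmod (c m) * ((Cmod z + rho) / 2) ^ m)).
  - intros m. change (Cmod (c m * z ^ m) <= Cmod (c m) * ((Cmod z + rho) / 2) ^ m).
    rewrite Cmod_mult, Cmod_pow. apply Rmult_le_compat_l; [apply Cmod_ge_0|].
    apply pow_incr. lra.
  - apply Hc. lra.
Qed.

Lemma Cmod_INR (m : nat) : Cmod (INR m) = INR m.
Proof. rewrite Cmod_R. apply Rabs_pos_eq, pos_INR. Qed.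

(* Bernoulli: [m e r^m <= ((1 + e) r)^m], so the factor [m] costs only a slightly larger radius. *)
Lemma abs_conv_in_theta_coef (rho : R) (c : nat -> C) :
  abs_conv_in rho c -> abs_conv_in rho (theta_coef c).
Proof.
  intros Hc r Hr.
  set (e := (rho - r) / (2 * r)).
  assert (He : 0 < e) by (unfold e; apply Rdiv_lt_0_compat; lra).
  apply (ex_series_le (K := R_AbsRing) (V := R_CompleteNormedModule) _
           (fun m => / e * (Cmod (c m) * ((1 + e) * r) ^ m))).
  - intros m. unfold theta_coef. rewrite Cmod_mult, Cmod_INR.
    change (Rabs (INR m * Cmod (c m) * r ^ m) <= / e * (Cmod (c m) * ((1 + e) * r) ^ m)).
    pose proof (Cmod_ge_0 (c m)). pose proof (pos_INR m).
    assert (Hrm : 0 < r ^ m) by (apply pow_lt; lra).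
    pose proof (Rle_pow_lin e m (Rlt_le _ _ He)) as HB.
    rewrite Rabs_pos_eq by (apply Rmult_le_pos; [apply Rmult_le_pos|]; lra).
    rewrite Rpow_mult_distr.
    apply (Rmult_le_reg_l e); [lra|].
    replace (e * (/ e * (Cmod (c m) * ((1 + e) ^ m * r ^ m))))
      with (Cmod (c m) * ((1 + e) ^ m * r ^ m)) by (field; lra).
    assert (Hme : INR m * e <= (1 + e) ^ m) by lra.
    assert (0 <= Cmod (c m) * r ^ m) by (apply Rmult_le_pos; lra).
    nra.
  - apply (ex_series_scal (K := R_AbsRing) (V := R_NormedModule)).
    assert (Hs : (1 + e) * r = (r + rho) / 2) by (unfold e; field; lra).
    apply Hc. lra.
Qed.

Lemma abs_conv_in_shift (rho : R) (c : nat -> C) :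
  abs_conv_in rho c -> abs_conv_in rho (fun m => c (S m)).
Proof.
  intros Hc r Hr.
  apply (ex_series_ext (fun m => / r * (Cmod (c (S m)) * r ^ S m))).
  - intros m. change (/ r * (Cmod (c (S m)) * r ^ S m) = Cmod (c (S m)) * r ^ m).
    simpl pow. field. lra.
  - apply (ex_series_scal (K := R_AbsRing) (V := R_NormedModule)).
    apply (ex_series_incr_1 (K := R_AbsRing) (V := R_NormedModule) (fun m => Cmod (c m) * r ^ m)).
    exact (Hc r Hr).
Qed.

Lemma abs_conv_in_PSC_derive (rho : R) (c : nat -> C) :
  abs_conv_in rho c -> abs_conv_in rho (PSC_derive c).
Proof. intros Hc. exact (abs_conv_in_shift _ _ (abs_conv_in_theta_coef _ _ Hc)). Qed.

Lemma is_series_PSC_derive (rho : R) (c : nat -> C) (z : C) :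
  abs_conv_in rho c -> Cmod z < rho ->
  is_series (fun m => c m * (INR m * z ^ pred m))%C (PSeriesC (PSC_derive c) z).
Proof.
  intros Hc Hz.
  apply is_series_decr_1.
  replace (plus _ _) with (PSeriesC (PSC_derive c) z)
    by (change (PSeriesC (PSC_derive c) z = PSeriesC (PSC_derive c) z - c 0%nat * (INR 0 * 1))%C;
        simpl INR; ring).
  apply (is_series_C_ext (fun m => PSC_derive c m * z ^ m)%C).
  - intros m. unfold PSC_derive. simpl pred. ring.
  - apply PSeriesC_correct, (abs_conv_in_ex_series rho); [|exact Hz].
    exact (abs_conv_in_PSC_derive rho c Hc).
Qed.

Lemma theta_PSeriesC_coef (rho : R) (c : nat -> C) (z : C) :
  abs_conv_in rho c -> Cmod z < rho ->
  (z * PSeriesC (PSC_derive c) z)%C = PSeriesC (theta_coef c) z.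
Proof.
  intros Hc Hz.
  apply (is_series_C_unique (fun m => theta_coef c m * z ^ m)%C).
  - apply (is_series_C_ext (fun m => z * (c m * (INR m * z ^ pred m)))%C).
    + intros [|m]; unfold theta_coef; simpl; ring.
    + apply is_series_C_scal. exact (is_series_PSC_derive rho c z Hc Hz).
  - apply PSeriesC_correct, (abs_conv_in_ex_series rho); [|exact Hz].
    exact (abs_conv_in_theta_coef rho c Hc).
Qed.

Definition pow_rem1 (z h : C) (m : nat) : C := ((z + h) ^ m - z ^ m - INR m * h * z ^ pred m)%C.

Lemma pow_rem1_succ (z h : C) (m : nat) :
  pow_rem1 z h (S m) = ((z + h) * pow_rem1 z h m + INR m * (h * h) * z ^ pred m)%C.
Proof.
  unfold pow_rem1. destruct m as [|m].
  - simpl. ring.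
  - simpl pred. rewrite (S_INR (S m)), RtoC_plus. simpl Cpow. ring.
Qed.

Lemma Cmod_pow_rem1_le (z h : C) (r : R) (m : nat) :
  Cmod z <= r -> Cmod (z + h) <= r ->
  r ^ 2 * Cmod (pow_rem1 z h m) <= INR m ^ 2 * Cmod h ^ 2 * r ^ m.
Proof.
  intros Hz Hzh. pose proof (Cmod_ge_0 z). pose proof (Cmod_ge_0 h).
  assert (Hr : 0 <= r) by lra.
  induction m as [|m IH].
  - replace (pow_rem1 z h 0) with (RtoC 0) by (unfold pow_rem1; simpl; ring).
    rewrite Cmod_0. simpl. lra.
  - rewrite pow_rem1_succ, S_INR.
    pose proof (Cmod_triangle ((z + h) * pow_rem1 z h m) (INR m * (h * h) * z ^ pred m)) as T.
    rewrite !Cmod_mult, Cmod_INR, Cmod_pow in T.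
    pose proof (Cmod_ge_0 (pow_rem1 z h m)). pose proof (pos_INR m).
    set (a := Cmod h) in *. set (E := Cmod (pow_rem1 z h m)) in *.
    assert (Hlin : INR m * (Cmod z ^ pred m * r ^ 2) <= INR m * r ^ S m).
    { destruct m as [|m]; [simpl; lra|].
      apply Rmult_le_compat_l; [lra|].
      replace (r ^ S (S m)) with (r ^ m * r ^ 2) by (simpl; ring).
      apply Rmult_le_compat_r; [apply pow_le | apply pow_incr]; lra. }
    assert (Hquad : Cmod (z + h) * (r ^ 2 * E) <= INR m ^ 2 * a ^ 2 * r ^ S m).
    { replace (INR m ^ 2 * a ^ 2 * r ^ S m) with (r * (INR m ^ 2 * a ^ 2 * r ^ m)) by (simpl; ring).
      apply Rmult_le_compat; [apply Cmod_ge_0 | nra | exact Hzh | exact IH]. }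
    apply Rle_trans with (Cmod (z + h) * (r ^ 2 * E) + a ^ 2 * (INR m * (Cmod z ^ pred m * r ^ 2))).
    + replace (Cmod (z + h) * (r ^ 2 * E) + a ^ 2 * (INR m * (Cmod z ^ pred m * r ^ 2)))
        with (r ^ 2 * (Cmod (z + h) * E + INR m * (a * a) * Cmod z ^ pred m)) by ring.
      apply Rmult_le_compat_l; [apply pow_le; lra | exact T].
    + assert (a ^ 2 * (INR m * (Cmod z ^ pred m * r ^ 2)) <= a ^ 2 * (INR m * r ^ S m))
        by (apply Rmult_le_compat_l; [apply pow_le; lra | exact Hlin]).
      assert (0 <= a ^ 2 * r ^ S m) by (apply Rmult_le_pos; apply pow_le; lra).
      nra.
Qed.

Lemma PSeriesC_taylor_le (rho : R) (c : nat -> C) (z h : C) (r K : R) :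
  abs_conv_in rho c -> r < rho -> Cmod z <= r -> Cmod (z + h) <= r ->
  is_series (fun m => Cmod (theta_coef (theta_coef c) m) * r ^ m) K ->
  r ^ 2 * Cmod (PSeriesC c (z + h) - PSeriesC c z - h * PSeriesC (PSC_derive c) z)%C
    <= Cmod h ^ 2 * K.
Proof.
  intros Hc Hr Hz Hzh HK.
  assert (Hz' : Cmod z < rho) by lra. assert (Hzh' : Cmod (z + h) < rho) by lra.
  assert (Hrem : is_series (fun m => c m * pow_rem1 z h m)%C
                   (PSeriesC c (z + h) - PSeriesC c z - h * PSeriesC (PSC_derive c) z)%C).
  { apply (is_series_C_ext (fun m => c m * (z + h) ^ m - c m * z ^ m
                                     - h * (c m * (INR m * z ^ pred m)))%C).
    - intros m. unfold pow_rem1. ring.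
    - apply is_series_C_minus; [apply is_series_C_minus|].
      + exact (PSeriesC_correct _ _ (abs_conv_in_ex_series _ _ _ Hc Hzh')).
      + exact (PSeriesC_correct _ _ (abs_conv_in_ex_series _ _ _ Hc Hz')).
      + exact (is_series_C_scal h _ _ (is_series_PSC_derive _ _ _ Hc Hz')). }
  assert (Hr2 : 0 <= r ^ 2) by (apply pow_le; pose proof (Cmod_ge_0 z); lra).
  rewrite <- (Rabs_pos_eq (r ^ 2)) by exact Hr2. rewrite <- Cmod_R, <- Cmod_mult.
  apply (Cmod_is_series_le _ (fun m => Cmod h ^ 2 * (Cmod (theta_coef (theta_coef c) m) * r ^ m))
           _ _ (is_series_C_scal _ _ _ Hrem)
           (is_series_scal (K := R_AbsRing) (V := R_NormedModule) _ _ _ HK)).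
  intros m. unfold theta_coef. rewrite !Cmod_mult, !Cmod_INR, Cmod_R, Rabs_pos_eq by exact Hr2.
  pose proof (Cmod_pow_rem1_le z h r m Hz Hzh). pose proof (Cmod_ge_0 (c m)).
  replace (Cmod h ^ 2 * (INR m * (INR m * Cmod (c m)) * r ^ m))
    with (Cmod (c m) * (INR m ^ 2 * Cmod h ^ 2 * r ^ m)) by ring.
  nra.
Qed.

Lemma is_derive_C_of_quadratic_le (f : C -> C) (z l : C) (d K : R) :
  0 < d -> (forall h, Cmod h < d -> Cmod (f (z + h) - f z - h * l)%C <= K * Cmod h ^ 2) ->
  is_derive f z l.
Proof.
  intros Hd Hf. split; [apply is_linear_scal_l|].
  intros x Hx eps.
  apply (is_filter_lim_locally_unique (K := C_AbsRing) (V := AbsRing_NormedModule C_AbsRing)) in Hx.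
  subst x.
  apply (locally_norm_le_locally (K := C_AbsRing) (V := AbsRing_NormedModule C_AbsRing)).
  pose proof (cond_pos eps) as Heps. pose proof (Rabs_pos K).
  assert (Hdelta : 0 < Rmin d (eps / (Rabs K + 1))).
  { apply Rmin_pos; [lra|]. apply Rdiv_lt_0_compat; lra. }
  exists (mkposreal _ Hdelta). intros y Hy. change C in y.
  change (Cmod (y - z) < Rmin d (eps / (Rabs K + 1))) in Hy.
  change (Cmod (f y - f z - (y - z) * l) <= eps * Cmod (y - z)).
  pose proof (Rmin_l d (eps / (Rabs K + 1))). pose proof (Rmin_r d (eps / (Rabs K + 1))).
  pose proof (Hf (y - z)%C ltac:(lra)) as Hq.
  replace (z + (y - z))%C with y in Hq by ring.
  set (a := Cmod (y - z)) in *. pose proof (Cmod_ge_0 (y - z)) as Ha. fold a in Ha.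
  assert (HKa : Rabs K * a <= eps).
  { apply Rle_trans with (Rabs K * (eps / (Rabs K + 1))); [apply Rmult_le_compat_l; lra|].
    apply (Rmult_le_reg_r (Rabs K + 1)); [lra|].
    replace (Rabs K * (eps / (Rabs K + 1)) * (Rabs K + 1)) with (Rabs K * eps) by (field; lra).
    nra. }
  pose proof (Rle_abs K).
  nra.
Qed.

Lemma is_derive_PSeriesC (rho : R) (c : nat -> C) (z : C) :
  abs_conv_in rho c -> Cmod z < rho -> is_derive (PSeriesC c) z (PSeriesC (PSC_derive c) z).
Proof.
  intros Hc Hz. pose proof (Cmod_ge_0 z).
  set (r := (Cmod z + rho) / 2).
  assert (Hr : 0 < r < rho) by (unfold r; lra).
  destruct (abs_conv_in_theta_coef _ _ (abs_conv_in_theta_coef _ _ Hc) r Hr) as [K HK].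
  apply (is_derive_C_of_quadratic_le _ _ _ ((rho - Cmod z) / 2) (K / r ^ 2)); [lra|].
  intros h Hh.
  assert (Hzh : Cmod (z + h) <= r) by (pose proof (Cmod_triangle z h); unfold r; lra).
  pose proof (PSeriesC_taylor_le rho c z h r K Hc ltac:(lra) ltac:(unfold r; lra) Hzh HK) as HT.
  assert (Hr2 : 0 < r ^ 2) by (apply pow_lt; lra).
  apply (Rmult_le_reg_l (r ^ 2)); [exact Hr2|].
  replace (r ^ 2 * (K / r ^ 2 * Cmod h ^ 2)) with (Cmod h ^ 2 * K) by (field; lra).
  exact HT.
Qed.

Lemma CDerive_correct (f : C -> C) (z l : C) : is_derive f z l -> CDerive f z = l.
Proof.
  intros H. unfold CDerive.
  assert (H' : is_derive f z (epsilon (inhabits (RtoC 0)) (fun l => is_derive f z l)))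
    by (apply epsilon_spec; exists l; exact H).
  apply is_C_derive_unique in H, H'. congruence.
Qed.

Lemma locally_Cmod_lt (rho : R) (z : C) :
  Cmod z < rho -> @locally (AbsRing_UniformSpace C_AbsRing) z (fun t => Cmod t < rho).
Proof.
  intros Hz.
  apply (locally_norm_le_locally (K := C_AbsRing) (V := AbsRing_NormedModule C_AbsRing)).
  assert (Hd : 0 < rho - Cmod z) by lra.
  exists (mkposreal _ Hd). intros t Ht. change C in t.
  change (Cmod (t - z) < rho - Cmod z) in Ht.
  pose proof (Cmod_triangle z (t - z)) as T.
  replace (z + (t - z))%C with t in T by ring.
  simpl in Ht. lra.
Qed.

Lemma is_derive_loc_PSeriesC (rho : R) (c : nat -> C) (f : C -> C) (z : C) :
  abs_conv_in rho c -> (forall t, Cmod t < rho -> f t = PSeriesC c t) -> Cmod z < rho ->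
  is_derive f z (PSeriesC (PSC_derive c) z).
Proof.
  intros Hc Hf Hz. apply (is_derive_ext_loc (PSeriesC c)).
  - eapply filter_imp; [|exact (locally_Cmod_lt rho z Hz)].
    intros t Ht. symmetry. exact (Hf t Ht).
  - exact (is_derive_PSeriesC rho c z Hc Hz).
Qed.

Lemma abs_conv_in_iter_theta_coef (rho : R) (c : nat -> C) (k : nat) :
  abs_conv_in rho c -> abs_conv_in rho (Nat.iter k theta_coef c).
Proof.
  intros Hc. induction k as [|k IH]; [exact Hc|].
  exact (abs_conv_in_theta_coef _ _ IH).
Qed.

Lemma theta_n_PSeriesC (rho : R) (c : nat -> C) (k : nat) (z : C) :
  abs_conv_in rho c -> Cmod z < rho ->
  theta_n k (PSeriesC c) z = PSeriesC (Nat.iter k theta_coef c) z.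
Proof.
  intros Hc. revert z. induction k as [|k IH]; intros z Hz; [reflexivity|].
  pose proof (abs_conv_in_iter_theta_coef rho c k Hc) as Hck.
  simpl theta_n. unfold theta.
  rewrite (CDerive_correct _ _ _ (is_derive_loc_PSeriesC rho _ _ z Hck IH Hz)).
  exact (theta_PSeriesC_coef rho _ z Hck Hz).
Qed.

Lemma ex_derive_theta_n_PSeriesC (rho : R) (c : nat -> C) (k : nat) (z : C) :
  abs_conv_in rho c -> Cmod z < rho -> ex_derive (theta_n k (PSeriesC c)) z.
Proof.
  intros Hc Hz. eexists.
  apply (is_derive_loc_PSeriesC rho _ _ z (abs_conv_in_iter_theta_coef rho c k Hc)); [|exact Hz].
  intros t Ht. exact (theta_n_PSeriesC rho c k t Hc Ht).
Qed.

Lemma iter_theta_coef (c : nat -> C) (k m : nat) :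
  Nat.iter k theta_coef c m = (INR m ^ k * c m)%C.
Proof.
  induction k as [|k IH]; [simpl; ring|].
  change (INR m * Nat.iter k theta_coef c m = INR m ^ S k * c m)%C.
  rewrite IH. simpl. ring.
Qed.

Lemma is_series_theta_n_PSeriesC (rho : R) (c : nat -> C) (k : nat) (z : C) :
  abs_conv_in rho c -> Cmod z < rho ->
  is_series (fun m => INR m ^ k * c m * z ^ m)%C (theta_n k (PSeriesC c) z).
Proof.
  intros Hc Hz. rewrite (theta_n_PSeriesC rho c k z Hc Hz).
  apply (is_series_C_ext (fun m => Nat.iter k theta_coef c m * z ^ m)%C).
  - intros m. cbv beta. rewrite iter_theta_coef. reflexivity.
  - apply PSeriesC_correct, (abs_conv_in_ex_series rho); [|exact Hz].
    exact (abs_conv_in_iter_theta_coef rho c k Hc).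
Qed.

Definition ode_P (x : R) : R := 4 * x ^ 4 + 10 * x ^ 3 + 8 * x ^ 2 + 2 * x.
Definition ode_Q (x : R) : R := x ^ 4 + 4 * x ^ 3 + 6 * x ^ 2 + 4 * x + 1.

Section OdeSeries.

Variables (c : nat -> C) (z : C) (T : nat -> C).
Hypothesis HT : forall k, is_series (fun m => INR m ^ k * c m * z ^ m)%C (T k).

Lemma is_series_ode_P :
  is_series (fun m => ode_P (INR m) * c m * z ^ m)%C
    (RtoC 4 * T 4%nat + RtoC 10 * T 3%nat + RtoC 8 * T 2%nat + RtoC 2 * T 1%nat)%C.
Proof.
  apply (is_series_C_ext (fun m =>
    RtoC 4 * (INR m ^ 4 * c m * z ^ m) + RtoC 10 * (INR m ^ 3 * c m * z ^ m)
    + RtoC 8 * (INR m ^ 2 * c m * z ^ m) + RtoC 2 * (INR m ^ 1 * c m * z ^ m))%C).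
  - intros m. unfold ode_P. rewrite !RtoC_plus, !RtoC_mult, !RtoC_pow. ring.
  - apply is_series_C_plus; [apply is_series_C_plus; [apply is_series_C_plus|]|];
      apply is_series_C_scal, HT.
Qed.

Lemma is_series_ode_Q :
  is_series (fun m => ode_Q (INR m) * c m * z ^ m)%C
    (T 4%nat + RtoC 4 * T 3%nat + RtoC 6 * T 2%nat + RtoC 4 * T 1%nat + T 0%nat)%C.
Proof.
  apply (is_series_C_ext (fun m =>
    INR m ^ 4 * c m * z ^ m + RtoC 4 * (INR m ^ 3 * c m * z ^ m)
    + RtoC 6 * (INR m ^ 2 * c m * z ^ m) + RtoC 4 * (INR m ^ 1 * c m * z ^ m)
    + INR m ^ 0 * c m * z ^ m)%C).
  - intros m. unfold ode_Q. rewrite !RtoC_plus, !RtoC_mult, !RtoC_pow. ring.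
  - apply is_series_C_plus;
      [apply is_series_C_plus; [apply is_series_C_plus; [apply is_series_C_plus|]|]|].
    + apply HT.
    + apply is_series_C_scal, HT.
    + apply is_series_C_scal, HT.
    + apply is_series_C_scal, HT.
    + apply HT.
Qed.

Lemma ode_of_coef_rec :
  (forall n, (ode_P (INR (S n)) * c (S n) + ode_Q (INR n) * c n = 0)%C) ->
  ((RtoC 4 + z) * T 4%nat + (RtoC 10 + RtoC 4 * z) * T 3%nat
   + (RtoC 8 + RtoC 6 * z) * T 2%nat + (RtoC 2 + RtoC 4 * z) * T 1%nat
   + z * T 0%nat = RtoC 0)%C.
Proof.
  intros Hrec.
  pose proof is_series_ode_P as SP. pose proof is_series_ode_Q as SQ.
  set (PT := (RtoC 4 * T 4%nat + RtoC 10 * T 3%nat + RtoC 8 * T 2%nat + RtoC 2 * T 1%nat)%C)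
    in SP.
  set (QT := (T 4%nat + RtoC 4 * T 3%nat + RtoC 6 * T 2%nat + RtoC 4 * T 1%nat + T 0%nat)%C)
    in SQ.
  assert (SP1 : is_series (fun m => ode_P (INR (S m)) * c (S m) * z ^ S m)%C PT).
  { apply (is_series_incr_1 (K := C_AbsRing) (V := C_NormedModule)
             (fun m => ode_P (INR m) * c m * z ^ m)%C).
    assert (HP0 : ode_P (INR 0) = 0) by (unfold ode_P; simpl; ring).
    replace (plus PT _) with PT by (change (PT = PT + ode_P (INR 0) * c 0%nat * z ^ 0)%C;
                                     rewrite HP0; ring).
    exact SP. }
  assert (Hsum : (PT + z * QT = RtoC 0 * QT)%C).
  { apply (is_series_C_unique (fun m => ode_P (INR (S m)) * c (S m) * z ^ S m
                                        + z * (ode_Q (INR m) * c m * z ^ m))%C).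
    - exact (is_series_C_plus _ _ _ _ SP1 (is_series_C_scal z _ _ SQ)).
    - apply (is_series_C_ext (fun m => RtoC 0 * (ode_Q (INR m) * c m * z ^ m))%C);
        [|exact (is_series_C_scal _ _ _ SQ)].
      intros m. symmetry.
      transitivity (z ^ S m * (ode_P (INR (S m)) * c (S m) + ode_Q (INR m) * c m))%C.
      + cbv beta. change (z ^ S m)%C with (z * z ^ m)%C. ring.
      + rewrite Hrec. ring. }
  transitivity (PT + z * QT)%C; [unfold PT, QT; ring|].
  rewrite Hsum. ring.
Qed.

End OdeSeries.

Lemma central_binom_pos (n : nat) : 0 < central_binom n.
Proof.
  unfold central_binom, Binomial.C. apply Rdiv_lt_0_compat; [apply INR_fact_lt_0|].
  apply Rmult_lt_0_compat; apply INR_fact_lt_0.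
Qed.

Lemma central_binom_succ (n : nat) :
  INR (S n) * central_binom (S n) = 2 * (2 * INR n + 1) * central_binom n.
Proof.
  unfold central_binom, Binomial.C.
  replace (2 * S n - S n)%nat with (S n) by lia.
  replace (2 * n - n)%nat with n by lia.
  replace (2 * S n)%nat with (S (S (2 * n))) by lia.
  rewrite !fact_simpl, !mult_INR, !S_INR, mult_INR.
  pose proof (INR_fact_lt_0 (2 * n)). pose proof (INR_fact_lt_0 n). pose proof (pos_INR n).
  simpl INR. field. lra.
Qed.

Definition Pi0_coefR (m : nat) : R :=
  2 * (-1) ^ m / (INR (S m) ^ 3 * central_binom (S m)).

Lemma Pi0_coefR_0 : Pi0_coefR 0 = 1.
Proof. unfold Pi0_coefR, central_binom, Binomial.C. simpl. field. Qed.

Lemma Pi0_coefR_succ (n : nat) :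
  2 * (INR n + 2) ^ 2 * (2 * INR n + 3) * Pi0_coefR (S n) = - (INR n + 1) ^ 3 * Pi0_coefR n.
Proof.
  unfold Pi0_coefR.
  pose proof (central_binom_succ (S n)) as Hb.
  pose proof (central_binom_pos (S n)).
  pose proof (pos_INR n).
  rewrite !S_INR in *.
  replace (central_binom (S (S n)))
    with (2 * (2 * (INR n + 1) + 1) * central_binom (S n) / (INR n + 1 + 1))
    by (rewrite <- Hb; field; lra).
  simpl pow. field. lra.
Qed.

Lemma Rabs_Pi0_coefR_le (m : nat) : Rabs (Pi0_coefR m) <= (/ 4) ^ m.
Proof.
  induction m as [|m IH].
  - rewrite Pi0_coefR_0, Rabs_R1. simpl. lra.
  - pose proof (pos_INR m) as Hx.
    assert (HD : 0 < 2 * (INR m + 2) ^ 2 * (2 * INR m + 3)) by (simpl; nra).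
    assert (Hrec : 2 * (INR m + 2) ^ 2 * (2 * INR m + 3) * Rabs (Pi0_coefR (S m))
                   = (INR m + 1) ^ 3 * Rabs (Pi0_coefR m)).
    { rewrite <- (Rabs_pos_eq (2 * _ * _)) by lra.
      rewrite <- Rabs_mult, Pi0_coefR_succ, Rabs_mult, Rabs_Ropp, Rabs_pos_eq
        by (apply pow_le; lra).
      reflexivity. }
    set (x := INR m) in *.
    assert (Hgrow : 4 * (x + 1) ^ 3 <= 2 * (x + 2) ^ 2 * (2 * x + 3)) by (simpl; nra).
    apply (Rmult_le_reg_l (2 * (x + 2) ^ 2 * (2 * x + 3))); [exact HD|].
    rewrite Hrec. change ((/ 4) ^ S m) with (/ 4 * (/ 4) ^ m).
    apply Rle_trans with ((x + 1) ^ 3 * (/ 4) ^ m).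
    + apply Rmult_le_compat_l; [apply pow_le; lra | exact IH].
    + rewrite <- Rmult_assoc. apply Rmult_le_compat_r; [apply pow_le|]; lra.
Qed.

Lemma abs_conv_in_Pi0_coef : abs_conv_in 4 Pi0_coef.
Proof.
  intros r Hr.
  apply (ex_series_le (K := R_AbsRing) (V := R_CompleteNormedModule) _ (fun m => (r / 4) ^ m)).
  - intros m. change (Rabs (Cmod (Pi0_coefR m) * r ^ m) <= (r / 4) ^ m).
    rewrite Cmod_R, Rabs_pos_eq by (apply Rmult_le_pos; [apply Rabs_pos | apply pow_le; lra]).
    rewrite Rmult_comm, Rdiv_def, Rpow_mult_distr.
    apply Rmult_le_compat_l; [apply pow_le; lra | apply Rabs_Pi0_coefR_le].
  - apply ex_series_geom. rewrite Rabs_pos_eq; lra.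
Qed.

Lemma Pi0_coef_ode_rec (n : nat) :
  (ode_P (INR (S n)) * Pi0_coef (S n) + ode_Q (INR n) * Pi0_coef n = 0)%C.
Proof.
  change (ode_P (INR (S n)) * Pi0_coefR (S n) + ode_Q (INR n) * Pi0_coefR n = 0)%C.
  rewrite <- !RtoC_mult, <- RtoC_plus. f_equal.
  unfold ode_P, ode_Q. rewrite S_INR.
  transitivity ((INR n + 1) * (2 * (INR n + 2) ^ 2 * (2 * INR n + 3) * Pi0_coefR (S n)
                               + (INR n + 1) ^ 3 * Pi0_coefR n)); [ring|].
  rewrite Pi0_coefR_succ. ring.
Qed.

Lemma Pi0_eq_PSeriesC : Pi0 = PSeriesC Pi0_coef.
Proof. reflexivity. Qed.

Open Scope C_scope.

Theorem mainTheorem1 :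
  forall phi : C, (Cmod phi < 4)%R ->
    ex_series (fun m => Pi0_coef m * phi ^ m) /\
    (forall k : nat, (k < 4)%nat -> ex_derive (theta_n k Pi0) phi) /\
    (RtoC 4 + phi) * theta_n 4 Pi0 phi
    + (RtoC 10 + RtoC 4 * phi) * theta_n 3 Pi0 phi
    + (RtoC 8 + RtoC 6 * phi) * theta_n 2 Pi0 phi
    + (RtoC 2 + RtoC 4 * phi) * theta_n 1 Pi0 phi
    + phi * Pi0 phi = RtoC 0.
Proof.
  intros phi Hphi. rewrite Pi0_eq_PSeriesC.
  pose proof abs_conv_in_Pi0_coef as Hc.
  split; [|split].
  - exact (abs_conv_in_ex_series 4 _ _ Hc Hphi).
  - intros k _. exact (ex_derive_theta_n_PSeriesC 4 Pi0_coef k phi Hc Hphi).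
  - apply (ode_of_coef_rec Pi0_coef phi (fun k => theta_n k (PSeriesC Pi0_coef) phi)).
    + intros k. exact (is_series_theta_n_PSeriesC 4 Pi0_coef k phi Hc Hphi).
    + exact Pi0_coef_ode_rec.
Qed.
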